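(* Let $K>0$ and let $A,P,B,Q$ be points of $\mathbb S^3_K$ with $A\neq P$, $B\neq Q$. Let $M_1$ and $M_2$ be the midpoints of the shortests $AP$ and $BQ$, respectively. Then $\operatorname{cosq}_K(\overrightarrow{AP},\overrightarrow{BQ})=\operatorname{cosq}_K(\overrightarrow{AM_1},\overrightarrow{BM_2})$.
   Context: For $K>0$, $\mathbb S^3_K$ is the open hemisphere of radius $1/\sqrt K$ of the round 3-sphere with its intrinsic metric $\rho$ (all distances are $<\pi/\sqrt K$ and shortests are unique). Let $\kappa=\sqrt K$. For $A\neq P$, $B\neq Q$ put $x=\rho(A,P)$, $y=\rho(B,Q)$, $a=\rho(A,B)$, $b=\rho(P,Q)$, $d=\rho(P,B)$, $f=\rho(A,Q)$ and $$\operatorname{cosq}_K(\overrightarrow{AP},\overrightarrow{BQ})=\frac{\cos\kappa b+\cos\kappa x\cos\kappa y}{\sin\kappa x\sin\kappa y}-\frac{(\cos\kappa x+\cos\kappa d)(\cos\kappa y+\cos\kappa f)}{(1+\cos\kappa a)\sin\kappa x\sin\kappa y}.$$ *)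

From Stdlib Require Import Reals Lra.
Open Scope R_scope.

Definition pt : Type := (R * R * R * R)%type.

Definition dot (x y : pt) : R :=
  let '(x1, x2, x3, x4) := x in
  let '(y1, y2, y3, y4) := y in
  x1 * y1 + x2 * y2 + x3 * y3 + x4 * y4.

(* The open hemisphere S^3_K of the round 3-sphere of radius 1/sqrt K in R^4
   (centered at the origin), taken as the hemisphere with last coordinate > 0. *)
Definition inS3 (K : R) (x : pt) : Prop :=
  K * dot x x = 1 /\ 0 < snd x.

Definition rho (K : R) (x y : pt) : R :=
  acos (K * dot x y) / sqrt K.

(* M is the midpoint of the shortest AP: a point of S^3_K at distance
   rho(A,P)/2 from both A and P (in this uniquely geodesic space this is the
   midpoint of the unique shortest joining A and P). *)
Definition is_midpoint (K : R) (A P M : pt) : Prop :=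
  inS3 K M /\ rho K A M = rho K A P / 2 /\ rho K M P = rho K A P / 2.

Definition cosq (K : R) (A P B Q : pt) : R :=
  let k := sqrt K in
  let x := rho K A P in
  let y := rho K B Q in
  let a := rho K A B in
  let b := rho K P Q in
  let d := rho K P B in
  let f := rho K A Q in
  (cos (k * b) + cos (k * x) * cos (k * y)) / (sin (k * x) * sin (k * y))
  - ((cos (k * x) + cos (k * d)) * (cos (k * y) + cos (k * f)))
    / ((1 + cos (k * a)) * sin (k * x) * sin (k * y)).

(* Work in R^4 with c := K <A, M1>. Since the distances are great-circle distances,
   K <X, Y> is the cosine of the (rescaled) distance, so cosq is a rational
   function of these inner products and of sin = sqrt (1 - cos^2).  The midpoint
   M1 of AP satisfies 2 c M1 = A + P (the defect vector has zero norm), hence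
   every inner product with M1 is an average of those with A and P; moreover
   c = cos(x/2), so cos x = 2 c^2 - 1 and sin x = 2 c sin(x/2).  Substituting these
   relations (and their analogues for M2) makes the two expressions for cosq
   agree identically. *)

From Stdlib Require Import Reals Lra Psatz.
Open Scope R_scope.

Definition pzero : pt := (0, 0, 0, 0).

Definition padd (X Y : pt) : pt :=
  let '(x1, x2, x3, x4) := X in
  let '(y1, y2, y3, y4) := Y in
  (x1 + y1, x2 + y2, x3 + y3, x4 + y4).

Definition psub (X Y : pt) : pt :=
  let '(x1, x2, x3, x4) := X in
  let '(y1, y2, y3, y4) := Y in
  (x1 - y1, x2 - y2, x3 - y3, x4 - y4).

Definition pscale (r : R) (X : pt) : pt :=
  let '(x1, x2, x3, x4) := X in (r * x1, r * x2, r * x3, r * x4).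

Ltac destruct_pts :=
  repeat match goal with X : pt |- _ => destruct X as [[[? ?] ?] ?] end.

Lemma dot_comm (X Y : pt) : dot X Y = dot Y X.
Proof. destruct_pts; simpl; ring. Qed.

Lemma dot_addl (X Y Z : pt) : dot (padd X Y) Z = dot X Z + dot Y Z.
Proof. destruct_pts; simpl; ring. Qed.

Lemma dot_subl (X Y Z : pt) : dot (psub X Y) Z = dot X Z - dot Y Z.
Proof. destruct_pts; simpl; ring. Qed.

Lemma dot_scalel (r : R) (X Y : pt) : dot (pscale r X) Y = r * dot X Y.
Proof. destruct_pts; simpl; ring. Qed.

Lemma dot_self_ge0 (X : pt) : 0 <= dot X X.
Proof. destruct_pts; simpl; nra. Qed.

Lemma dot_self_gt0 (X : pt) : 0 < snd X -> 0 < dot X X.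
Proof. destruct_pts; simpl; nra. Qed.

Lemma dot_self_eq0 (X : pt) : dot X X = 0 -> X = pzero.
Proof.
  destruct X as [[[x1 x2] x3] x4]; simpl; intros H.
  assert (x1 = 0) by nra; assert (x2 = 0) by nra;
  assert (x3 = 0) by nra; assert (x4 = 0) by nra; subst; reflexivity.
Qed.

Lemma snd_padd (X Y : pt) : snd (padd X Y) = snd X + snd Y.
Proof. destruct_pts; reflexivity. Qed.

Lemma psub_eq0 (X Y : pt) : psub X Y = pzero -> X = Y.
Proof.
  destruct_pts; simpl; intros H; injection H; intros.
  f_equal; [f_equal; [f_equal|]|]; lra.
Qed.

Section Sphere.

Variable K : R.
Hypothesis HK : 0 < K.

Lemma sqrtK_neq0 : sqrt K <> 0.
Proof. apply Rgt_not_eq, sqrt_lt_R0, HK. Qed.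

Lemma dot_sphere_norm_add_sub (X Y : pt) : inS3 K X -> inS3 K Y ->
  K * dot (padd X Y) (padd X Y) = 2 + 2 * (K * dot X Y) /\
  K * dot (psub X Y) (psub X Y) = 2 - 2 * (K * dot X Y).
Proof.
  intros [HX _] [HY _].
  rewrite !dot_addl, !dot_subl, (dot_comm X (padd X Y)), (dot_comm Y (padd X Y)),
    (dot_comm X (psub X Y)), (dot_comm Y (psub X Y)), !dot_addl, !dot_subl, (dot_comm Y X).
  split; lra.
Qed.

Lemma dot_sphere_bounds (X Y : pt) : inS3 K X -> inS3 K Y ->
  -1 < K * dot X Y <= 1.
Proof.
  intros HX HY.
  destruct (dot_sphere_norm_add_sub X Y HX HY) as [Hsum Hdif].
  assert (Hpos : 0 < dot (padd X Y) (padd X Y)).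
  { apply dot_self_gt0; rewrite snd_padd; destruct HX, HY; lra. }
  pose proof (dot_self_ge0 (psub X Y)).
  split; nra.
Qed.

Lemma dot_sphere_eq1 (X Y : pt) : inS3 K X -> inS3 K Y ->
  K * dot X Y = 1 -> X = Y.
Proof.
  intros HX HY H1.
  destruct (dot_sphere_norm_add_sub X Y HX HY) as [_ Hdif].
  apply psub_eq0, dot_self_eq0.
  apply (Rmult_eq_reg_l K); lra.
Qed.

Lemma dot_sphere_lt1 (X Y : pt) : inS3 K X -> inS3 K Y -> X <> Y ->
  K * dot X Y < 1.
Proof.
  intros HX HY HXY.
  destruct (dot_sphere_bounds X Y HX HY) as [_ [Hlt | Heq]]; [exact Hlt |].
  contradiction (HXY (dot_sphere_eq1 X Y HX HY Heq)).
Qed.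

Lemma cos_sqrt_rho (X Y : pt) : inS3 K X -> inS3 K Y ->
  cos (sqrt K * rho K X Y) = K * dot X Y.
Proof.
  intros HX HY; unfold rho.
  replace (sqrt K * (acos (K * dot X Y) / sqrt K)) with (acos (K * dot X Y))
    by (field; apply sqrtK_neq0).
  apply cos_acos; pose proof (dot_sphere_bounds X Y HX HY); lra.
Qed.

Lemma sin_sqrt_rho (X Y : pt) : inS3 K X -> inS3 K Y ->
  sin (sqrt K * rho K X Y) = sqrt (1 - (K * dot X Y)²).
Proof.
  intros HX HY; unfold rho.
  replace (sqrt K * (acos (K * dot X Y) / sqrt K)) with (acos (K * dot X Y))
    by (field; apply sqrtK_neq0).
  apply sin_acos; pose proof (dot_sphere_bounds X Y HX HY); lra.
Qed.

Lemma cosq_dot (A P B Q : pt) :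
  inS3 K A -> inS3 K P -> inS3 K B -> inS3 K Q ->
  cosq K A P B Q =
    (K * dot P Q + K * dot A P * (K * dot B Q))
      / (sqrt (1 - (K * dot A P)²) * sqrt (1 - (K * dot B Q)²))
  - ((K * dot A P + K * dot P B) * (K * dot B Q + K * dot A Q))
      / ((1 + K * dot A B) * sqrt (1 - (K * dot A P)²) * sqrt (1 - (K * dot B Q)²)).
Proof.
  intros HA HP HB HQ; unfold cosq.
  rewrite !cos_sqrt_rho, !sin_sqrt_rho by assumption.
  reflexivity.
Qed.

Lemma acos_of_rho_half (X Y X' Y' : pt) :
  rho K X Y = rho K X' Y' / 2 -> acos (K * dot X Y) = acos (K * dot X' Y') / 2.
Proof.
  unfold rho; intros H.
  apply (Rmult_eq_reg_r (/ sqrt K)); [| apply Rinv_neq_0_compat, sqrtK_neq0].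
  unfold Rdiv in *; rewrite H; field; apply sqrtK_neq0.
Qed.

End Sphere.

Section Midpoint.

Variable K : R.
Hypothesis HK : 0 < K.
Variables A P M : pt.
Hypotheses (HA : inS3 K A) (HP : inS3 K P) (HM : is_midpoint K A P M).

Let HMS : inS3 K M := proj1 HM.

Lemma midpoint_acos_l : acos (K * dot A M) = acos (K * dot A P) / 2.
Proof. apply acos_of_rho_half, (proj1 (proj2 HM)); exact HK. Qed.

Lemma midpoint_acos_r : acos (K * dot M P) = acos (K * dot A P) / 2.
Proof. apply acos_of_rho_half, (proj2 (proj2 HM)); exact HK. Qed.

Lemma midpoint_cos_half : K * dot A M = cos (acos (K * dot A P) / 2).
Proof.
  rewrite <- midpoint_acos_l, cos_acos; [reflexivity |].
  pose proof (dot_sphere_bounds K HK A M HA HMS); lra.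
Qed.

Lemma midpoint_dot_sym : K * dot M P = K * dot A M.
Proof.
  rewrite midpoint_cos_half, <- midpoint_acos_r, cos_acos; [reflexivity |].
  pose proof (dot_sphere_bounds K HK M P HMS HP); lra.
Qed.

Lemma midpoint_cos_double : 2 * (K * dot A M)² - 1 = K * dot A P.
Proof.
  rewrite midpoint_cos_half; unfold Rsqr; rewrite <- Rmult_assoc, <- cos_2a_cos.
  replace (2 * (acos (K * dot A P) / 2)) with (acos (K * dot A P)) by field.
  apply cos_acos; pose proof (dot_sphere_bounds K HK A P HA HP); lra.
Qed.

Lemma midpoint_dot_pos : 0 < K * dot A M.
Proof.
  assert (Hge : 0 <= K * dot A M).
  { rewrite midpoint_cos_half.
    pose proof (acos_bound (K * dot A P)); pose proof PI_RGT_0.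
    apply cos_ge_0; lra. }
  pose proof midpoint_cos_double; pose proof (dot_sphere_bounds K HK A P HA HP).
  unfold Rsqr in *; nra.
Qed.

Lemma midpoint_dot_lt1 : A <> P -> K * dot A M < 1.
Proof.
  intros HAP.
  pose proof midpoint_cos_double; pose proof midpoint_dot_pos;
  pose proof (dot_sphere_lt1 K HK A P HA HP HAP).
  unfold Rsqr in *; nra.
Qed.

(* As vectors of R^4, [2 cos(x/2) M = A + P]: the defect has zero norm. *)
Lemma midpoint_scale : pscale (2 * (K * dot A M)) M = padd A P.
Proof.
  apply psub_eq0, dot_self_eq0.
  set (E := psub (pscale (2 * (K * dot A M)) M) (padd A P)).
  assert (HE : K * dot E E =
    4 * (K * dot A M)² * (K * dot M M) - 4 * (K * dot A M) * (K * dot A M + K * dot M P)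
    + K * dot A A + 2 * (K * dot A P) + K * dot P P).
  { unfold E; rewrite !dot_subl, !dot_scalel, !(dot_comm _ (psub _ _)),
      !dot_subl, !dot_scalel, !dot_addl, !(dot_comm _ (padd _ _)), !dot_addl,
      (dot_comm P A), (dot_comm P M).
    unfold Rsqr; ring. }
  rewrite midpoint_dot_sym, <- midpoint_cos_double, (proj1 HMS), (proj1 HA), (proj1 HP)
    in HE.
  apply (Rmult_eq_reg_l K); [| lra].
  rewrite HE; unfold Rsqr; ring.
Qed.

Lemma midpoint_dot_l (Z : pt) :
  K * dot M Z = (K * dot A Z + K * dot P Z) / (2 * (K * dot A M)).
Proof.
  pose proof midpoint_dot_pos as Hc.
  pose proof (f_equal (fun X => K * dot X Z) midpoint_scale) as Hs; simpl in Hs.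
  rewrite dot_scalel, dot_addl in Hs.
  replace (K * dot A Z + K * dot P Z) with (2 * (K * dot A M) * (K * dot M Z))
    by (rewrite <- Rmult_plus_distr_l, <- Hs; ring).
  field; split; intros Hz; rewrite Hz in Hc; lra.
Qed.

Lemma midpoint_dot_r (Z : pt) :
  K * dot Z M = (K * dot Z A + K * dot Z P) / (2 * (K * dot A M)).
Proof. rewrite !(dot_comm Z); apply midpoint_dot_l. Qed.

End Midpoint.

Lemma sqrt_1_sub_sqr_cos_double (c : R) : 0 <= c -> c² <= 1 ->
  sqrt (1 - (2 * c² - 1)²) = 2 * c * sqrt (1 - c²).
Proof.
  intros Hc Hc1.
  replace (1 - (2 * c² - 1)²) with ((2 * c)² * (1 - c²)) by (unfold Rsqr; ring).
  rewrite sqrt_mult by (try apply Rle_0_sqr; lra).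
  rewrite sqrt_Rsqr by lra; reflexivity.
Qed.

Theorem lemma3p2 (K : R) (A P B Q M1 M2 : pt) :
  0 < K ->
  inS3 K A -> inS3 K P -> inS3 K B -> inS3 K Q ->
  A <> P -> B <> Q ->
  is_midpoint K A P M1 -> is_midpoint K B Q M2 ->
  cosq K A P B Q = cosq K A M1 B M2.
Proof.
  intros HK HA HP HB HQ HAP HBQ HM1 HM2.
  rewrite (cosq_dot K HK A P B Q), (cosq_dot K HK A M1 B M2)
    by (exact (proj1 HM1) || exact (proj1 HM2) || assumption).
  rewrite (midpoint_dot_l K HK A P M1 HA HP HM1 M2),
    (midpoint_dot_r K HK B Q M2 HB HQ HM2 A), (midpoint_dot_r K HK B Q M2 HB HQ HM2 P),
    (midpoint_dot_l K HK A P M1 HA HP HM1 B).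
  rewrite <- (midpoint_cos_double K HK A P M1 HA HP HM1),
    <- (midpoint_cos_double K HK B Q M2 HB HQ HM2).
  pose proof (midpoint_dot_pos K HK A P M1 HA HP HM1) as Hc1.
  pose proof (midpoint_dot_pos K HK B Q M2 HB HQ HM2) as Hc2.
  pose proof (midpoint_dot_lt1 K HK A P M1 HA HP HM1 HAP) as Hc1'.
  pose proof (midpoint_dot_lt1 K HK B Q M2 HB HQ HM2 HBQ) as Hc2'.
  rewrite !sqrt_1_sub_sqr_cos_double by (unfold Rsqr; nra).
  set (c1 := K * dot A M1) in *; set (c2 := K * dot B M2) in *.
  assert (Hs1 : 0 < sqrt (1 - c1²)) by (apply sqrt_lt_R0; unfold Rsqr; nra).
  assert (Hs2 : 0 < sqrt (1 - c2²)) by (apply sqrt_lt_R0; unfold Rsqr; nra).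
  pose proof (dot_sphere_bounds K HK A B HA HB).
  unfold Rsqr in *; field; repeat split; lra.
Qed.
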